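(* Let $\Phi=\{\varphi_i\}_{i=1}^K$ be a homogeneous IFS on $\mathbb R^d$ with common contraction ratio $r\in(0,1)$ satisfying the strong separation condition, with self-similar set $X$, coding map $\pi:\Sigma\to X$ and induced map $T:X\to X$. Let $\psi:\mathbb N\to[0,\infty)$. Then there exists $N\in\mathbb N$ depending only on $\Phi$ such that $$\pi\big(R_{\lfloor\psi\rfloor+N}\big)\subseteq\tilde R_\psi\subseteq\pi\big(R_{\lfloor\psi\rfloor-N}\big).$$
   Context: A contracting similarity is a map $\varphi:\mathbb R^d\to\mathbb R^d$ with $\|\varphi(x)-\varphi(y)\|=r\|x-y\|$ for some $r\in(0,1)$; an IFS is a finite set $\Phi=\{\varphi_i\}_{i=1}^K$ of contracting similarities, homogeneous if all have the same ratio $r$. Its self-similar set is the unique nonempty compact $X$ with $X=\bigcup_i\varphi_i(X)$. With $\Sigma=\{1,\dots,K\}^{\mathbb N}$, $\pi(\mathbf i)=\lim_{n\to\infty}\varphi_{i_1}\circ\cdots\circ\varphi_{i_n}(0)$. $\Phi$ satisfies the strong separation condition if $\varphi_i(X)\cap\varphi_j(X)=\emptyset$ for $i\ne j$; then $T(x)=\varphi_i^{-1}(x)$ for $x\in\varphi_i(X)$. $\tilde R_\psi=\{x\in X:\|T^n(x)-x\|\le r^{\psi(n)}\text{ for infinitely many }n\in\mathbb N\}$ (Euclidean norm). On $\Sigma$, $|\mathbf i\wedge\mathbf j|=\inf\{n\ge0:i_{n+1}\ne j_{n+1}\}$, $d(\mathbf i,\mathbf j)=K^{-|\mathbf i\wedge\mathbf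 j|}$, $\sigma$ is the left shift, and for an integer-valued function $\phi$ on $\mathbb N$, $R_\phi=\{\mathbf i\in\Sigma:d(\sigma^n\mathbf i,\mathbf i)\le K^{-\phi(n)}\text{ for infinitely many }n\}$; here $\lfloor\psi\rfloor\pm N$ denotes $n\mapsto\lfloor\psi(n)\rfloor\pm N$. *)

From HB Require Import structures.
From mathcomp Require Import all_boot all_order all_algebra.
From mathcomp Require Import all_classical all_reals all_analysis.
Set Implicit Arguments. Unset Strict Implicit. Unset Printing Implicit Defensive.
Import Order.TTheory GRing.Theory Num.Theory.
Import numFieldNormedType.Exports.
Local Open Scope classical_set_scope.
Local Open Scope ring_scope.

Section Defs.
Variable R : realType.

Definition enorm (d : nat) (v : 'rV[R]_d) : R :=
  Num.sqrt (\sum_(i < d) v ord0 i ^+ 2).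

Definition contracting_similarity (d : nat) (r : R) (phi : 'rV[R]_d -> 'rV[R]_d) :=
  0 < r < 1 /\ forall x y, enorm (phi x - phi y) = r * enorm (x - y).

(* X is the self-similar set of the IFS {phi_i}_{i < K}: nonempty compact with
   X = \bigcup_i phi_i(X) (such a set is unique). *)
Definition is_attractor (d K : nat) (phi : 'I_K -> 'rV[R]_d -> 'rV[R]_d)
  (X : set 'rV[R]_d) :=
  X !=set0 /\ compact X /\ X = \bigcup_(i in [set: 'I_K]) (phi i @` X).

Definition SSC (d K : nat) (phi : 'I_K -> 'rV[R]_d -> 'rV[R]_d) (X : set 'rV[R]_d) :=
  forall i j : 'I_K, i != j -> phi i @` X `&` phi j @` X = set0.

(* phi_{w_1} o ... o phi_{w_n} (0) ; sequences are indexed from 0, so w 0 = i_1. *)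
Definition comp_prefix (d K : nat) (phi : 'I_K -> 'rV[R]_d -> 'rV[R]_d)
  (w : nat -> 'I_K) (n : nat) : 'rV[R]_d :=
  foldr (fun k acc => phi (w k) acc) 0 (iota 0 n).

Definition coding (d K : nat) (phi : 'I_K -> 'rV[R]_d -> 'rV[R]_d)
  (w : nat -> 'I_K) : 'rV[R]_d :=
  limn (comp_prefix phi w).

(* induced map T : T x = phi_i^{-1} x for x in phi_i(X) (arbitrary outside X). *)
Definition induced_map (d K : nat) (phi : 'I_K -> 'rV[R]_d -> 'rV[R]_d)
  (X : set 'rV[R]_d) (x : 'rV[R]_d) : 'rV[R]_d :=
  xget x [set y | X y /\ exists i, phi i y = x].

Definition shiftn (K : nat) (n : nat) (w : nat -> 'I_K) : nat -> 'I_K :=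
  fun k => w (k + n)%N.

(* d(i, j) = K^{-|i /\ j|}, |i /\ j| = first index at which i and j differ
   (infinite, hence distance 0, if i = j). *)
Definition seq_dist (K : nat) (i j : nat -> 'I_K) : R :=
  match pselect (exists n, i n != j n) with
  | left H => (K%:R : R) ^- (@ex_minn (fun n => i n != j n) H)
  | right _ => 0
  end.

Definition Rset (K : nat) (f : nat -> int) : set (nat -> 'I_K) :=
  [set w | forall m : nat, exists n : nat, (m <= n)%N /\
     seq_dist (shiftn n w) w <= (K%:R : R) ^ (- f n)].

Definition Rtilde (d K : nat) (phi : 'I_K -> 'rV[R]_d -> 'rV[R]_d)
  (X : set 'rV[R]_d) (r : R) (psi : nat -> R) : set 'rV[R]_d :=
  [set x | X x /\ forall m : nat, exists n : nat, (m <= n)%N /\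
     enorm (iter n (induced_map phi X) x - x) <= r `^ (psi n)].

End Defs.

From HB Require Import structures.
From mathcomp Require Import all_boot all_order all_algebra.
From mathcomp Require Import all_classical all_reals all_analysis.
From mathcomp Require Import zify.
Import Order.TTheory GRing.Theory Num.Theory.
Import numFieldNormedType.Exports.
Local Open Scope classical_set_scope.
Local Open Scope ring_scope.

(* Under the strong separation condition the coding map is a bijection from
   words onto X that conjugates the shift to T, so that T^n (pi w) = pi (shift^n w).
   Both distances are then controlled by the length k of the common prefix of
   two words u and v: d(u, v) = K^-k, while
     del * r^k <= |pi u - pi v| <= D * r^k,
   where D bounds the diameter of X and del > 0 is the least distance between
   two distinct first-level pieces phi_i(X), phi_j(X) (positive by compactness
   and separation).  Hence |T^n x - x| <= r^psi(n) and
   d(shift^n w, w) <= K^-floor(psi(n)) agree up to a constant shift N of the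
   exponent, with N depending only on D, del and r. *)

Section EuclideanNorm.
Context {R : realType} {d : nat}.
Implicit Types v : 'rV[R]_d.

Lemma enorm_ge0 v : 0 <= enorm v.
Proof. exact: sqrtr_ge0. Qed.

Lemma enorm0 : enorm (0 : 'rV[R]_d) = 0.
Proof. by rewrite /enorm big1 ?sqrtr0 // => i _; rewrite mxE expr0n. Qed.

Lemma norm_le_enorm v : `|v| <= enorm v.
Proof.
rewrite [leLHS]/Num.Def.normr /= mx_normrE.
apply: bigmax_le => [|[i j] _ /=]; first exact: enorm_ge0.
rewrite (ord1 i) /enorm -(sqrtr_sqr (v ord0 j)) ler_sqrt; last first.
  by apply: sumr_ge0 => k _; rewrite sqr_ge0.
by rewrite (bigD1 j) //= lerDl; apply: sumr_ge0 => k _; rewrite sqr_ge0.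
Qed.

Lemma enorm_le_norm v : enorm v <= d%:R * `|v|.
Proof.
have coord_le j : `|v ord0 j| <= `|v|.
  rewrite [leRHS]/Num.Def.normr /= mx_normrE.
  by apply/bigmax_geP; right; exists (ord0, j).
rewrite /enorm -(ger0_norm (mulr_ge0 (ler0n _ d) (normr_ge0 v))) -sqrtr_sqr.
rewrite ler_sqrt ?sqr_ge0 //.
apply: (@le_trans _ _ (\sum_(i < d) `|v| ^+ 2)).
  by apply: ler_sum => i _; rewrite -real_normK ?num_real // lerXn2r ?nnegrE.
rewrite sumr_const card_ord -mulr_natl mulr1 exprMn -[leLHS]mulr_natl.
apply: ler_wpM2r; first exact: sqr_ge0.
by rewrite -natrX ler_nat; case: d => // n; rewrite expnS leq_pmulr.
Qed.

Lemma enorm_eq0 v : enorm v = 0 -> v = 0.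
Proof.
by move=> v0; apply/normr0_eq0/le_anti; rewrite normr_ge0 -v0 norm_le_enorm.
Qed.

End EuclideanNorm.

Lemma similarity_continuous (R : realType) (d : nat) (c : R)
    (f : 'rV[R]_d -> 'rV[R]_d) :
  (forall x y, enorm (f x - f y) = c * enorm (x - y)) -> continuous f.
Proof.
move=> f_sim x; apply/(@cvgrPdist_lt _ _ _ (nbhs x) (@nbhs_filter _ x)) => e e_gt0.
have k_gt0 : 0 < `|c| * d%:R + 1 by rewrite ltr_pwDr // mulr_ge0.
near=> y; apply: le_lt_trans (norm_le_enorm _) _.
rewrite f_sim; apply: le_lt_trans (ler_wpM2r (enorm_ge0 _) (ler_norm c)) _.
apply: le_lt_trans (ler_wpM2l (normr_ge0 c) (enorm_le_norm _)) _.
have : `|x - y| < e / (`|c| * d%:R + 1).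
  by near: y; apply: cvgr_dist_lt => //; rewrite divr_gt0.
rewrite ltr_pdivlMr // mulrA; apply: le_lt_trans.
by rewrite mulrC ler_wpM2l // lerDl.
Unshelve. all: by end_near.
Qed.

Lemma ord_neq_gt1 {K : nat} {a b : 'I_K} : a != b -> (1 < K)%N.
Proof.
by case: K a b => [[]|[|K]] // a b; rewrite (ord1 a) (ord1 b) eqxx.
Qed.

(* Prefix lengths are integers: a nonpositive length imposes no constraint,
   just as [seq_dist u v <= K ^ (- m)] is automatic for [m <= 0]. *)
Definition same_prefix {K : nat} (m : int) (u v : nat -> 'I_K) :=
  forall j : nat, (j%:Z < m)%R -> u j = v j.

Lemma same_prefix_le {K : nat} (m m' : int) (u v : nat -> 'I_K) :
  (m' <= m)%R -> same_prefix m u v -> same_prefix m' u v.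
Proof. by move=> le_m uv j lt_j; apply: uv; apply: lt_le_trans le_m. Qed.

Section SeqDist.
Variable R : realType.
Context {K : nat}.
Implicit Types u v : nat -> 'I_K.

Lemma seq_distP u v :
  (seq_dist R u v = 0 /\ u = v) \/
  exists k, [/\ u k != v k, same_prefix k u v & seq_dist R u v = (K%:R : R) ^- k].
Proof.
rewrite /seq_dist; case: pselect => [ex_neq | no_neq].
  right; case: (ex_minnP ex_neq) => k neq_k min_k; exists k; split => // j lt_jk.
  by apply/eqP; apply: contraTT lt_jk => /min_k; rewrite ltz_nat -leqNgt.
left; split => //; apply: funext => n; apply/eqP.
by apply: contraT => neq_n; exfalso; apply: no_neq; exists n.
Qed.

Lemma seq_dist_le_exprzP u v (m : int) :
  seq_dist R u v <= (K%:R : R) ^ (- m) <-> same_prefix m u v.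
Proof.
case: (seq_distP u v) => [[-> ->] | [k [neq_k pre_k ->]]].
  by split=> // _; apply: exprz_ge0.
have K_gt1 : 1 < (K%:R : R) by rewrite ltr1n (ord_neq_gt1 neq_k).
rewrite exprnN ler_eXz2l // lerN2; split=> [le_mk | pre_m].
  by apply: same_prefix_le pre_k.
by rewrite leNgt; apply/negP => /pre_m /eqP; rewrite (negbTE neq_k).
Qed.

End SeqDist.

Section Words.
Context {R : realType} {d K : nat}.
Variable phi : 'I_K -> 'rV[R]_d -> 'rV[R]_d.
Implicit Types (w : nat -> 'I_K) (x y : 'rV[R]_d).

Definition word_map w n x := foldr (fun k acc => phi (w k) acc) x (iota 0 n).

Lemma word_mapS w n x : word_map w n.+1 x = word_map w n (phi (w n) x).
Proof. by rewrite /word_map -[n.+1]addn1 iotaD foldr_cat. Qed.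

Lemma word_mapD w n k x :
  word_map w (n + k) x = word_map w n (word_map (shiftn n w) k x).
Proof.
elim: k x => [|k IH] x; first by rewrite addn0.
by rewrite addnS !word_mapS IH /shiftn addnC.
Qed.

Lemma eq_word_map {u v : nat -> 'I_K} {n : nat} {x : 'rV[R]_d} :
  same_prefix n u v -> word_map u n x = word_map v n x.
Proof.
elim: n x => [|n IH] x uv //; rewrite !word_mapS uv ?ltz_nat // IH //.
by apply: same_prefix_le uv; rewrite lez_nat.
Qed.

Lemma shiftnD w m n : shiftn m (shiftn n w) = shiftn (n + m) w.
Proof. by apply: funext => j; rewrite /shiftn -addnA [(m + n)%N]addnC. Qed.

Lemma shiftn0 w : shiftn 0 w = w.
Proof. by apply: funext => j; rewrite /shiftn addn0. Qed.

End Words.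

Section WordSimilarity.
Context {R : realType} {d K : nat} {r : R} {phi : 'I_K -> 'rV[R]_d -> 'rV[R]_d}.
Implicit Types (w : nat -> 'I_K) (x y : 'rV[R]_d).
Local Notation word_map := (word_map phi).
Hypothesis enorm_phi : forall i x y, enorm (phi i x - phi i y) = r * enorm (x - y).

Lemma enorm_word_map w n x y :
  enorm (word_map w n x - word_map w n y) = r ^+ n * enorm (x - y).
Proof.
elim: n x y => [|n IH] x y; first by rewrite mul1r.
by rewrite !word_mapS IH enorm_phi exprSr mulrA.
Qed.

Lemma word_map_continuous w n : continuous (word_map w n).
Proof. exact: similarity_continuous (enorm_word_map w n). Qed.

End WordSimilarity.

Section Coding.
Context {R : realType} {d K : nat} {r : R}.
Context {phi : 'I_K -> 'rV[R]_d -> 'rV[R]_d} {X : set 'rV[R]_d}.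
Hypotheses (r_gt0 : 0 < r) (r_lt1 : r < 1).
Hypothesis enorm_phi : forall i x y, enorm (phi i x - phi i y) = r * enorm (x - y).
Hypothesis X_attractor : is_attractor phi X.

Local Notation word_map := (word_map phi).

Lemma geometric_lt (A : R) {e : R} : 0 < e ->
  exists N, forall n, (N <= n)%N -> A * r ^+ n < e.
Proof.
move=> e_gt0; have r_norm_lt1 : `|r| < 1 by rewrite ger0_norm // ltW.
have [N _ HN] := cvgr_dist_lt _ _ (cvg_geometric A r_norm_lt1) _ e_gt0.
by exists N => n /HN /=; rewrite sub0r normrN; apply: le_lt_trans (ler_norm _).
Qed.

Lemma ler0_geometric (x A : R) : (forall n, x <= A * r ^+ n) -> x <= 0.
Proof.
move=> x_le; apply/ler_addgt0Pr => e e_gt0; rewrite add0r.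
have [N HN] := geometric_lt A e_gt0.
exact: le_trans (x_le N) (ltW (HN N (leqnn N))).
Qed.

Lemma phi_in i x : X x -> X (phi i x).
Proof.
by case: X_attractor => [_ [_ X_eq]] Xx; rewrite X_eq; exists i => //; exists x.
Qed.

Lemma word_map_in w n x : X x -> X (word_map w n x).
Proof. by elim: n x => [|n IH] x Xx //; rewrite word_mapS; apply/IH/phi_in. Qed.

Lemma enorm_sub_bounded : exists D, forall x y, X x -> X y -> enorm (x - y) <= D.
Proof.
case: X_attractor => _ [X_compact _]; have [B [_ HB]] := compact_bounded X_compact.
have X_le z : X z -> `|z| <= `|B| + 1.
  by apply: HB; apply: le_lt_trans (ler_norm B) _; rewrite ltrDl.
exists (d%:R * ((`|B| + 1) *+ 2)) => x y Xx Xy.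
apply: le_trans (enorm_le_norm _) _; apply: ler_wpM2l => //.
by apply: le_trans (ler_normB _ _) _; rewrite mulr2n lerD ?X_le.
Qed.

Lemma word_map_sub_cvg0 w x y :
  word_map w n x - word_map w n y @[n --> \oo] --> (0 : 'rV[R]_d).
Proof.
apply/(cvgr0Pnorm_lt (fun n => word_map w n x - word_map w n y)) => e e_gt0.
have [N HN] := geometric_lt (enorm (x - y)) e_gt0.
exists N => // n /= le_Nn; apply: le_lt_trans (norm_le_enorm _) _.
by rewrite (enorm_word_map enorm_phi) mulrC HN.
Qed.

Lemma word_map_is_cvg w x : X x -> cvgn (word_map w ^~ x).
Proof.
move=> Xx; have [D HD] := enorm_sub_bounded.
apply: cauchy_cvg; apply: cauchy_exP => e e_gt0.
have [M HM] := geometric_lt D e_gt0.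
exists (word_map w M x); exists M => // n /= le_Mn.
rewrite -ball_normE /ball_ /= -(subnKC le_Mn) word_mapD.
apply: le_lt_trans (norm_le_enorm _) _; rewrite (enorm_word_map enorm_phi) mulrC.
apply: le_lt_trans (HM M (leqnn M)); apply: ler_wpM2r; first exact/exprn_ge0/ltW.
exact: HD _ _ Xx (word_map_in _ _ _ Xx).
Qed.

Lemma cvg_word_map w x : word_map w n x @[n --> \oo] --> coding phi w.
Proof.
case: X_attractor => [[x0 Xx0] _].
suff to_lim y : word_map w n y @[n --> \oo] --> limn (word_map w ^~ x0).
  rewrite /coding (_ : comp_prefix phi w = word_map w ^~ 0) //.
  by rewrite (cvg_lim _ (to_lim 0)); [exact: to_lim | exact: norm_hausdorff].
have -> : word_map w ^~ y = word_map w ^~ x0 + (word_map w ^~ y - word_map w ^~ x0).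
  by apply: funext => n /=; rewrite addrC subrK.
rewrite -[l in _ --> l]addr0; apply: cvgD; first exact: word_map_is_cvg.
exact: word_map_sub_cvg0.
Qed.

Lemma coding_in w : X (coding phi w).
Proof.
case: X_attractor => [[x0 Xx0] [X_compact _]].
have X_closed : closed X by apply: compact_closed X_compact; exact: norm_hausdorff.
apply: (@closed_cvg _ _ \oo _ (word_map w ^~ x0) X X_closed _ _ (cvg_word_map w x0)).
by apply: nearW => n; apply: word_map_in.
Qed.

Lemma coding_word_map w n : coding phi w = word_map w n (coding phi (shiftn n w)).
Proof.
have lhs : word_map w (k + n) 0 @[k --> \oo] --> coding phi w.
  by rewrite (cvg_shiftn n (word_map w ^~ 0)); apply: cvg_word_map.
have rhs : word_map w (k + n) 0 @[k --> \oo] --> word_map w n (coding phi (shiftn n w)).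
  under eq_fun do rewrite addnC word_mapD.
  apply: continuous_cvg; last exact: cvg_word_map.
  exact: (word_map_continuous enorm_phi).
exact: cvg_unique lhs rhs.
Qed.

Lemma coding_cons w : coding phi w = phi (w 0%N) (coding phi (shiftn 1 w)).
Proof. exact: coding_word_map w 1. Qed.

Lemma coding_surj : X `<=` range (coding phi).
Proof.
move=> x Xx; case: X_attractor => [_ [_ X_eq]].
have [i0 _ _] : (\bigcup_(i in [set: 'I_K]) (phi i @` X)) x by rewrite -X_eq.
have preimage y : exists p : 'I_K * 'rV[R]_d, X y -> X p.2 /\ phi p.1 p.2 = y.
  have [Xy | nXy] := pselect (X y); last by exists (i0, y) => /nXy.
  by move: Xy; rewrite {1}X_eq => -[i _ [z Xz <-]]; exists (i, z).
have [f f_pre] := choice preimage.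
pose xs n := iter n (fun y => (f y).2) x.
pose w n := (f (xs n)).1.
have Xxs n : X (xs n) by elim: n => [|n IH] //=; case: (f_pre _ IH).
have xs_eq n : xs n = phi (w n) (xs n.+1) by case: (f_pre _ (Xxs n)) => _ ->.
have x_eq n : x = word_map w n (xs n).
  by elim: n => [|n IH] //; rewrite word_mapS -xs_eq.
exists w => //; apply/eqP; rewrite -subr_eq0 -normr_le0.
have [D HD] := enorm_sub_bounded.
apply: (@ler0_geometric _ D) => n; rewrite (coding_word_map w n) {1}(x_eq n).
apply: le_trans (norm_le_enorm _) _; rewrite (enorm_word_map enorm_phi) mulrC.
by apply: ler_wpM2r; [exact/exprn_ge0/ltW | exact: HD _ _ (coding_in _) (Xxs n)].
Qed.

Lemma phi_inj i : injective (phi i).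
Proof.
move=> x y eq_xy; have := enorm_phi i x y; rewrite eq_xy subrr enorm0.
move=> /esym/eqP; rewrite mulf_eq0 gt_eqF //= => /eqP/enorm_eq0/eqP.
by rewrite subr_eq0 => /eqP.
Qed.

Hypothesis X_ssc : SSC phi X.

Lemma induced_map_coding w :
  induced_map phi X (coding phi w) = coding phi (shiftn 1 w).
Proof.
rewrite /induced_map; set P := [set y | X y /\ exists i, phi i y = coding phi w].
have P_tail : P (coding phi (shiftn 1 w)).
  by split; [exact: coding_in | exists (w 0%N); rewrite -coding_cons].
have [Xy [i eq_i]] := xgetPex (coding phi w) (ex_intro _ _ P_tail).
set y := xget _ P in Xy eq_i *.
suff eq_i0 : i = w 0%N by apply: (@phi_inj i); rewrite eq_i eq_i0 -coding_cons.
apply/eqP; apply: contraT => neq_i.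
have : (phi i @` X `&` phi (w 0%N) @` X) (coding phi w).
  split; first by exists y.
  by exists (coding phi (shiftn 1 w)); [exact: coding_in | rewrite -coding_cons].
by rewrite X_ssc.
Qed.

Lemma iter_induced_map_coding w n :
  iter n (induced_map phi X) (coding phi w) = coding phi (shiftn n w).
Proof.
elim: n => [|n IH] /=; first by rewrite shiftn0.
by rewrite IH induced_map_coding shiftnD addn1.
Qed.

Lemma phi_continuous i : continuous (phi i).
Proof. exact: similarity_continuous (enorm_phi i). Qed.

Lemma ssc_pair_gap i j : i != j -> exists2 del, 0 < del &
  forall x y, X x -> X y -> del <= `|phi i x - phi j y|.
Proof.
move=> neq_ij; case: X_attractor => [[x0 Xx0] [X_compact _]].
pose f (p : 'rV[R]_d * 'rV[R]_d) := `|phi i p.1 - phi j p.2|.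
have f_cont : continuous f.
  move=> p; apply: continuous_comp; last exact: norm_continuous.
  by apply: continuousB; apply: continuous_comp;
    [exact: cvg_fst | exact: phi_continuous | exact: cvg_snd | exact: phi_continuous].
have [c] := compact_EVT_min (ex_intro _ (x0, x0) (conj Xx0 Xx0))
  (compact_setX X_compact X_compact) (continuous_subspaceT f_cont).
rewrite inE => -[Xc1 Xc2] c_min.
exists (f c) => [|x y Xx Xy]; last by apply: (c_min (x, y)); rewrite inE.
rewrite normr_gt0 subr_eq0; apply/negP => /eqP eq_c.
have : (phi i @` X `&` phi j @` X) (phi i c.1) by split; [exists c.1 | exists c.2].
by rewrite X_ssc.
Qed.

Lemma ssc_gap : exists2 del, 0 < del & forall i j, i != j ->
  forall x y, X x -> X y -> del <= `|phi i x - phi j y|.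
Proof.
have gap_near (p : 'I_K * 'I_K) : \forall del \near 0^'+, p.1 != p.2 ->
    forall x y, X x -> X y -> del <= `|phi p.1 x - phi p.2 y|.
  case: p => i j /=; have [/ssc_pair_gap [g g_gt0 gap] | /negP eq_ij] := boolP (i != j).
    near=> del => _ x y Xx Xy; apply: le_trans (gap x y Xx Xy); near: del.
    exact: nbhs_right_le.
  by apply: nearW => del neq_ij; case: eq_ij.
have [del [del_gt0 gap]] :=
  filter_ex (filterI (nbhs_right_gt 0) (filter_forall _ gap_near)).
by exists del => // i j; apply: (gap (i, j)).
Unshelve. all: by end_near.
Qed.

Lemma enorm_coding_ge {del : R} {u v : nat -> 'I_K} {k : nat} :
  (forall i j, i != j -> forall x y, X x -> X y -> del <= `|phi i x - phi j y|) ->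
  same_prefix k u v -> u k != v k ->
  del * r ^+ k <= enorm (coding phi u - coding phi v).
Proof.
move=> gap uv neq_k.
rewrite (coding_word_map u k) (coding_word_map v k) (eq_word_map phi uv).
rewrite (enorm_word_map enorm_phi) mulrC ler_pM2l ?exprn_gt0 //.
apply: le_trans (norm_le_enorm _).
rewrite (coding_cons (shiftn k u)) (coding_cons (shiftn k v)) !shiftnD /shiftn !add0n.
by apply: gap => //; apply: coding_in.
Qed.

Lemma enorm_coding_le_of_same_prefix : exists N : nat, forall u v (k : nat),
  same_prefix (k + N)%N u v -> enorm (coding phi u - coding phi v) <= r ^+ k.
Proof.
have [D HD] := enorm_sub_bounded; have [N HN] := geometric_lt D ltr01.
exists N => u v k uv.
rewrite (coding_word_map u (k + N)) (coding_word_map v (k + N)) (eq_word_map phi uv).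
rewrite (enorm_word_map enorm_phi) exprD -mulrA.
apply: ler_piMr; first exact/exprn_ge0/ltW.
apply: le_trans (ltW (HN N (leqnn N))); rewrite mulrC.
apply: ler_wpM2r; first exact/exprn_ge0/ltW.
exact: HD _ _ (coding_in _) (coding_in _).
Qed.

Lemma same_prefix_of_enorm_coding_le : exists N : nat, forall u v (k : nat),
  enorm (coding phi u - coding phi v) <= r ^+ k -> same_prefix (k%:Z - N%:Z) u v.
Proof.
have [del del_gt0 gap] := ssc_gap; have [N HN] := geometric_lt 1 del_gt0.
exists N => u v k uv_close j; elim/ltn_ind: j => j IH lt_j.
apply/eqP; apply: contraT => neq_j.
have pre_j : same_prefix j u v.
  by move=> i; rewrite ltz_nat => lt_ij; apply: IH => //; lia.
have rk_le : r ^+ k <= r ^+ (j + N).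
  by apply: ler_wiXn2l; [exact: ltW | exact: ltW | lia].
have := le_trans (enorm_coding_ge gap pre_j neq_j) (le_trans uv_close rk_le).
rewrite exprD mulrC ler_pM2l ?exprn_gt0 // => /(lt_le_trans (HN N (leqnn N))).
by rewrite mul1r ltxx.
Qed.

End Coding.

Lemma powR_floor_bounds {R : realType} {r x : R} : 0 < r <= 1 -> 0 <= x ->
  exists n : nat, [/\ Num.floor x = n%:Z, r ^+ n.+1 <= r `^ x & r `^ x <= r ^+ n].
Proof.
move=> r01 x_ge0; have /andP[r_gt0 _] := r01.
exists `|Num.floor x|%N.
have floor_eq : Num.floor x = `|Num.floor x|%N by rewrite gez0_abs ?floor_ge0.
split => //; rewrite -powR_mulrn ?(ltW r_gt0) //; apply: (ger_powR r01).
  by apply: ltW; have := floorD1_gt x; rewrite floor_eq intrD -!pmulrn natr1.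
by have := floor_le x; rewrite floor_eq -pmulrn.
Qed.

Theorem proposition7p1 (R : realType) (d K : nat) (r : R)
  (phi : 'I_K -> 'rV[R]_d -> 'rV[R]_d) (X : set 'rV[R]_d) :
  (forall i, contracting_similarity r (phi i)) ->
  is_attractor phi X ->
  SSC phi X ->
  exists N : nat, forall psi : nat -> R, (forall n, 0 <= psi n) ->
    coding phi @` @Rset R K (fun n => Num.floor (psi n) + N%:Z)%R
      `<=` Rtilde phi X r psi /\
    Rtilde phi X r psi
      `<=` coding phi @` @Rset R K (fun n => Num.floor (psi n) - N%:Z)%R.
Proof.
move=> phi_sim X_att X_ssc.
have [r_gt0 r_lt1] : 0 < r /\ r < 1.
  case: (X_att) => [[x Xx] [_ X_eq]]; move: Xx; rewrite X_eq => -[i _ _].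
  by case: (phi_sim i) => /andP[].
have enorm_phi i := (phi_sim i).2.
have r01 : 0 < r <= 1 by rewrite r_gt0 ltW.
have iterE := iter_induced_map_coding r_gt0 r_lt1 enorm_phi X_att X_ssc.
have [N1 upper] := enorm_coding_le_of_same_prefix r_gt0 r_lt1 enorm_phi X_att.
have [N2 lower] := same_prefix_of_enorm_coding_le r_gt0 r_lt1 enorm_phi X_att X_ssc.
(* The extra 1 absorbs [psi n < floor (psi n) + 1]. *)
exists (N1 + N2).+1 => psi psi_ge0; split.
- move=> _ [w Rw <-]; split; first exact: (coding_in r_gt0 r_lt1 enorm_phi X_att).
  move=> m; have [n [le_mn dist_n]] := Rw m; exists n; split => //.
  have [fn [floor_eq lo _]] := powR_floor_bounds r01 (psi_ge0 n).
  rewrite iterE; apply: le_trans lo; apply: upper.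
  by move: dist_n; rewrite floor_eq => /seq_dist_le_exprzP; apply: same_prefix_le; lia.
- move=> x [Xx close]; have [w _ wx] := coding_surj r_gt0 r_lt1 enorm_phi X_att _ Xx.
  exists w => // m; have [n [le_mn]] := close m; rewrite -wx iterE => close_n.
  exists n; split => //.
  have [fn [floor_eq _ hi]] := powR_floor_bounds r01 (psi_ge0 n).
  rewrite floor_eq; apply/seq_dist_le_exprzP; apply: same_prefix_le (lower _ _ fn _).
    by lia.
  exact: le_trans close_n hi.
Qed.
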